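(* Let $\mathcal{X}=\{1,\dots,n\}$, let $\pi$ be a strictly positive probability distribution on $\mathcal{X}$, let $P$ be a $\pi$-reversible transition matrix, let $G$ be the Gibbs kernel induced by some partition of $\mathcal{X}$, and let $A_\alpha=\alpha P+(1-\alpha)G$. Then for every integer $l\geq2$ and every $\alpha\in(0,1)$, $$\|A_\alpha^l-\Pi\|_{F,\pi}^2\leq(n-1)(1-\alpha\gamma^*(P))^{2l}.$$
   Context: $\pi$-reversible means $\pi(x)P(x,y)=\pi(y)P(y,x)$. Gibbs kernel of a partition $\bigsqcup_i\mathcal{O}_i$: $G(x,y)=\pi(y)/\pi(\mathcal{O}(x))$ if $y\in\mathcal{O}(x)$ and $0$ otherwise. $\Pi$ is the matrix with every row equal to $\pi$; $\|M\|_{F,\pi}^2=\operatorname{Tr}(M^*M)$ with $M^*(x,y)=\pi(y)M(y,x)/\pi(x)$. For $\pi$-reversible $P$ with eigenvalues $\lambda_1\ge\dots\ge\lambda_n$, $\gamma^*(P)=1-\max\{|\lambda_2(P)|,|\lambda_n(P)|\}$. *)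

From HB Require Import structures.
From mathcomp Require Import all_boot all_order all_algebra.
Set Implicit Arguments. Unset Strict Implicit. Unset Printing Implicit Defensive.
Import Order.TTheory GRing.Theory Num.Theory.
Local Open Scope ring_scope.

Section Defs.
Variables (R : rcfType) (n : nat).

Definition pos_prob (pi : 'I_n -> R) : Prop :=
  (forall x, 0 < pi x) /\ \sum_x pi x = 1.

Definition stochastic (P : 'M[R]_n) : Prop :=
  (forall x y, 0 <= P x y) /\ (forall x, \sum_y P x y = 1).

Definition reversible (pi : 'I_n -> R) (P : 'M[R]_n) : Prop :=
  forall x y, pi x * P x y = pi y * P y x.

Definition gibbs (pi : 'I_n -> R) (Ps : {set {set 'I_n}}) : 'M[R]_n :=
  \matrix_(x, y) (if y \in pblock Ps x
                  then pi y / \sum_(z in pblock Ps x) pi z else 0).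

Definition Pimx (pi : 'I_n -> R) : 'M[R]_n := \matrix_(x, y) pi y.

Definition adj_pi (pi : 'I_n -> R) (M : 'M[R]_n) : 'M[R]_n :=
  \matrix_(x, y) (pi y * M y x / pi x).

Definition frob2 (pi : 'I_n -> R) (M : 'M[R]_n) : R := \tr (adj_pi pi M *m M).

(* matrix power (valid for every n) *)
Definition mxpow (M : 'M[R]_n) (l : nat) : 'M[R]_n := iter l (mulmx M) 1%:M.

Definition eig_list (P : 'M[R]_n) (s : seq R) : Prop :=
  sorted (fun a b : R => b <= a) s /\
  char_poly P = \prod_(a <- s) ('X - a%:P).

(* gamma^*(P) = 1 - max(|lambda_2|, |lambda_n|), for the sorted eigenvalue list s *)
Definition gamma_star (s : seq R) : R :=
  1 - Num.max `|s`_1| `|s`_(n.-1)|.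
End Defs.

From HB Require Import structures.
From mathcomp Require Import all_boot all_order all_algebra.
From mathcomp Require Import complex.
From mathcomp Require Import ring.
Set Implicit Arguments. Unset Strict Implicit. Unset Printing Implicit Defensive.
Import Order.TTheory GRing.Theory Num.Theory.
Local Open Scope ring_scope.

(* Conjugating by diag(sqrt pi) turns pi-reversible kernels into symmetric
   matrices, ||.||_{F,pi} into the plain Frobenius norm, Pi into the rank-one
   projection E = u^T u with u = sqrt pi, and makes u a fixed row of every
   symmetrized kernel.  On the orthogonal complement of u the symmetrized P
   contracts by rho = max(|lambda_2|, |lambda_n|) (spectral theorem, over
   R[i]) and the symmetrized Gibbs kernel, an orthogonal projection, by 1, so
   K = alpha S + (1 - alpha) H contracts by c = 1 - alpha gamma^*(P).  Finally
   K^l - E = (K - E)^l = (1 - E) (K - E)^l, so every row of K^l - E has norm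
   at most c^l times the norm of the corresponding row of 1 - E, and these
   squared norms add up to tr (1 - E) = n - 1. *)

Section RealDot.
Variables (R : rcfType) (n : nat).
Implicit Types (u v w : 'rV[R]_n) (A M : 'M[R]_n).

Definition dot u v : R := (u *m v^T) 0 0.
Definition vnorm v : R := Num.sqrt (dot v v).

Lemma dotE u v : dot u v = \sum_i u 0 i * v 0 i.
Proof. by rewrite /dot mxE; apply: eq_bigr => i _; rewrite mxE. Qed.

Lemma dotr0 v : dot v 0 = 0.
Proof. by rewrite /dot trmx0 mulmx0 mxE. Qed.

Lemma dotC u v : dot u v = dot v u.
Proof. by rewrite !dotE; apply: eq_bigr => i _; rewrite mulrC. Qed.

Lemma dotDl u v w : dot (u + v) w = dot u w + dot v w.
Proof. by rewrite /dot mulmxDl mxE. Qed.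

Lemma dotZl k u v : dot (k *: u) v = k * dot u v.
Proof. by rewrite /dot -scalemxAl mxE. Qed.

Lemma dot_mulmxl u v A : dot (u *m A) v = dot u (v *m A^T).
Proof. by rewrite /dot trmx_mul trmxK mulmxA. Qed.

Lemma dotDD u v : dot (u + v) (u + v) = dot u u + dot v v + dot u v *+ 2.
Proof.
rewrite !dotDl (dotC u (u + v)) (dotC v (u + v)) !dotDl (dotC v u) mulr2n.
ring.
Qed.

Lemma dot_ge0 v : 0 <= dot v v.
Proof. by rewrite dotE sumr_ge0 // => i _; rewrite -expr2 sqr_ge0. Qed.

Lemma dot_sqr_le u v : dot u v ^+ 2 <= dot u u * dot v v.
Proof.
pose a i : R := u 0 i; pose b i : R := v 0 i.
pose f i j := a i * a i * (b j * b j) - a i * b i * (a j * b j).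
have double : \sum_i \sum_j f i j = dot u u * dot v v - dot u v ^+ 2.
  rewrite !dotE expr2 !big_distrlr -sumrB.
  by apply: eq_bigr => i _; rewrite -sumrB.
have lagrange : \sum_i \sum_j (a i * b j - a j * b i) ^+ 2 = (\sum_i \sum_j f i j) *+ 2.
  rewrite mulr2n [X in _ = _ + X]exchange_big -big_split; apply: eq_bigr => i _.
  rewrite -big_split; apply: eq_bigr => j _; rewrite /f /=; ring.
rewrite -subr_ge0 -double -(pmulrn_lge0 _ (ltn0Sn 1)) -lagrange.
by apply: sumr_ge0 => i _; apply: sumr_ge0 => j _; apply: sqr_ge0.
Qed.

Lemma vnorm_ge0 v : 0 <= vnorm v.
Proof. exact: sqrtr_ge0. Qed.

Lemma sqr_vnorm v : vnorm v ^+ 2 = dot v v.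
Proof. exact/sqr_sqrtr/dot_ge0. Qed.

Lemma dot_le_vnorm u v : dot u v <= vnorm u * vnorm v.
Proof.
rewrite -sqrtrM ?dot_ge0 // (le_trans (ler_norm _)) // -sqrtr_sqr.
by rewrite ler_sqrt ?dot_sqr_le // mulr_ge0 ?dot_ge0.
Qed.

Lemma vnormD u v : vnorm (u + v) <= vnorm u + vnorm v.
Proof.
rewrite -[leRHS]ger0_norm ?addr_ge0 ?vnorm_ge0 // -sqrtr_sqr ler_wsqrtr //.
by rewrite dotDD sqrrD !sqr_vnorm [leRHS]addrAC lerD2l lerMn2r dot_le_vnorm.
Qed.

Lemma vnormZ k v : vnorm (k *: v) = `|k| * vnorm v.
Proof.
by rewrite /vnorm dotZl dotC dotZl mulrA -expr2 sqrtrM ?sqr_ge0 // sqrtr_sqr.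
Qed.

Lemma vnorm_proj A v : A^T = A -> A *m A = A -> vnorm (v *m A) <= vnorm v.
Proof.
move=> A_sym A_idem; apply: ler_wsqrtr.
have orth : dot (v *m A) (v - v *m A) = 0.
  by rewrite dot_mulmxl A_sym mulmxBl -mulmxA A_idem subrr dotr0.
have := dotDD (v *m A) (v - v *m A).
by rewrite orth mul0rn addr0 subrKC => ->; rewrite lerDl dot_ge0.
Qed.

Lemma vnorm_le_dot c u v :
  0 <= c -> dot u u <= c ^+ 2 * dot v v -> vnorm u <= c * vnorm v.
Proof.
move=> c_ge0 uv; rewrite /vnorm -(ger0_norm c_ge0) -sqrtr_sqr -sqrtrM ?sqr_ge0 //.
exact: ler_wsqrtr.
Qed.

Definition frob2mx A : R := \tr (A *m A^T).

Lemma frob2mxE A : frob2mx A = \sum_i dot (row i A) (row i A).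
Proof.
rewrite /frob2mx /mxtrace; apply: eq_bigr => i _.
by rewrite mxE dotE; apply: eq_bigr => j _; rewrite !mxE.
Qed.

Lemma frob2mx_mulmx_le A M c : 0 <= c ->
  (forall v, vnorm (v *m M) <= c * vnorm v) -> frob2mx (A *m M) <= c ^+ 2 * frob2mx A.
Proof.
move=> c_ge0 M_le; rewrite !frob2mxE mulr_sumr; apply: ler_sum => i _.
rewrite row_mul -!sqr_vnorm -exprMn lerXn2r ?nnegrE ?mulr_ge0 ?vnorm_ge0 //.
Qed.

Lemma mxpowS M l : mxpow M l.+1 = M *m mxpow M l.
Proof. by []. Qed.

Lemma vnorm_mxpow_le M c l v : 0 <= c ->
  (forall v, vnorm (v *m M) <= c * vnorm v) ->
  vnorm (v *m mxpow M l) <= c ^+ l * vnorm v.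
Proof.
move=> c_ge0 M_le; elim: l v => [|l IHl] v; first by rewrite mulmx1 expr0 mul1r.
rewrite mxpowS mulmxA exprSr -mulrA (le_trans (IHl _)) //.
by rewrite ler_wpM2l ?exprn_ge0.
Qed.

End RealDot.

Lemma mxpow_sub_idem (R : rcfType) n (K E : 'M[R]_n) l :
  K *m E = E -> E *m K = E -> E *m E = E -> (0 < l)%N ->
  mxpow K l - E = mxpow (K - E) l.
Proof.
move=> KE EK EE; case: l => // l _.
have EKl k : E *m mxpow K k = E.
  by elim: k => [|k IHk]; rewrite ?mulmx1 // mxpowS mulmxA EK.
elim: l => [|l IHl]; first by rewrite /= !mulmx1.
rewrite [mxpow (K - E) _]mxpowS -IHl [mxpow K _]mxpowS mulmxBl !mulmxBr KE EKl EE.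
by rewrite subrr subr0.
Qed.

Section RankOneDeflation.
Variables (R : rcfType) (n : nat) (K : 'M[R]_n) (u : 'rV[R]_n) (c : R).
Hypotheses (K_sym : K^T = K) (u_fixed : u *m K = u) (u_unit : dot u u = 1).
Hypotheses (c_ge0 : 0 <= c)
  (K_contract : forall v, dot v u = 0 -> vnorm (v *m K) <= c * vnorm v).

Local Notation E := (u^T *m u).

Let u_uT : u *m u^T = 1%:M.
Proof. by apply/matrixP => i j; rewrite !ord1 [RHS]mxE eqxx -u_unit. Qed.

Let E_sym : E^T = E.
Proof. by rewrite trmx_mul trmxK. Qed.

Let E_idem : E *m E = E.
Proof. by rewrite mulmxA -(mulmxA u^T) u_uT mulmx1. Qed.

Let E_K : E *m K = E.
Proof. by rewrite -mulmxA u_fixed. Qed.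

Let K_E : K *m E = E.
Proof. by rewrite -[K]K_sym mulmxA -trmx_mul u_fixed. Qed.

Let coE_sym : (1%:M - E)^T = 1%:M - E.
Proof. by rewrite linearB /= trmx1 E_sym. Qed.

Let coE_idem : (1%:M - E) *m (1%:M - E) = 1%:M - E.
Proof. by rewrite mulmxBl !mulmxBr !mulmx1 mul1mx E_idem subrr subr0. Qed.

Lemma deflation_contract v : vnorm (v *m (K - E)) <= c * vnorm v.
Proof.
have -> : v *m (K - E) = (v *m (1%:M - E)) *m K.
  by rewrite -mulmxA mulmxBl mul1mx E_K mulmxBr.
rewrite (le_trans (K_contract _)) ?ler_wpM2l ?vnorm_proj //.
by rewrite dot_mulmxl coE_sym mulmxBr mulmx1 mulmxA u_uT mul1mx subrr dotr0.
Qed.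

Lemma frob2mx_mxpow_deflation l : (0 < l)%N ->
  frob2mx (mxpow K l - E) <= (n%:R - 1) * c ^+ (2 * l).
Proof.
move=> l_gt0; rewrite (mxpow_sub_idem K_E E_K E_idem l_gt0).
have -> : mxpow (K - E) l = (1%:M - E) *m mxpow (K - E) l.
  case: l l_gt0 => // l _; rewrite mxpowS mulmxA.
  by congr (_ *m _); rewrite mulmxBl mul1mx mulmxBr E_K E_idem subrr subr0.
have frob2mx_coE : frob2mx (1%:M - E) = n%:R - 1.
  rewrite /frob2mx coE_sym coE_idem linearB /= mxtrace1 mxtrace_mulC trace_mx11.
  by rewrite -/(dot u u) u_unit.
rewrite mulrC mulnC exprM -frob2mx_coE; apply: frob2mx_mulmx_le; first exact: exprn_ge0.
by move=> v; apply: vnorm_mxpow_le => //; apply: deflation_contract.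
Qed.

End RankOneDeflation.

Lemma vnorm_comb_contract (R : rcfType) n (S H : 'M[R]_n) (u : 'rV[R]_n) (rho a : R) :
  H^T = H -> H *m H = H -> 0 <= a <= 1 ->
  (forall v, dot v u = 0 -> vnorm (v *m S) <= rho * vnorm v) ->
  forall v, dot v u = 0 ->
  vnorm (v *m (a *: S + (1 - a) *: H)) <= (a * rho + (1 - a)) * vnorm v.
Proof.
move=> H_sym H_idem /andP[a_ge0 a_le1] S_contract v vu.
rewrite mulmxDr -!scalemxAr (le_trans (vnormD _ _)) // !vnormZ.
rewrite !ger0_norm ?subr_ge0 // [leRHS]mulrDl -mulrA.
by rewrite lerD ?ler_wpM2l ?subr_ge0 ?S_contract ?vnorm_proj.
Qed.

Lemma char_poly_similar (F : comNzRingType) n (A V W : 'M[F]_n) :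
  V *m W = 1%:M -> char_poly (W *m A *m V) = char_poly A.
Proof.
move=> VW; rewrite /char_poly.
have VW_P : map_mx polyC V *m map_mx polyC W = 1%:M by rewrite -map_mxM VW map_mx1.
have -> : char_poly_mx (W *m A *m V) =
    map_mx polyC W *m char_poly_mx A *m map_mx polyC V.
  rewrite /char_poly_mx !map_mxM mulmxBr mulmxBl; congr (_ - _).
  by rewrite mul_mx_scalar -scalemxAl (mulmx1C VW_P) scalemx1.
by rewrite !det_mulmx mulrC mulrA -det_mulmx VW_P det1 mul1r.
Qed.

Section Symmetrize.
Variables (R : rcfType) (n : nat) (pi : 'I_n -> R).
Hypothesis pi_gt0 : forall x, 0 < pi x.
Implicit Types M N : 'M[R]_n.

Definition sqrt_pi : 'rV[R]_n := \row_x Num.sqrt (pi x).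

Definition symmetrize M : 'M[R]_n :=
  diag_mx sqrt_pi *m M *m diag_mx (map_mx GRing.inv sqrt_pi).

Let q x := Num.sqrt (pi x).

Let q_neq0 x : q x != 0.
Proof. by rewrite gt_eqF ?sqrtr_gt0. Qed.

Let sqr_q x : q x ^+ 2 = pi x.
Proof. by rewrite sqr_sqrtr ?ltW. Qed.

Let diag_sqrt_piK : diag_mx sqrt_pi *m diag_mx (map_mx GRing.inv sqrt_pi) = 1%:M.
Proof.
apply/matrixP => x y; rewrite mul_mx_diag !mxE.
by case: eqP => [->|_]; rewrite ?mulr0n ?mul0r //= mulfV ?q_neq0.
Qed.

Let symmetrizeE M x y : symmetrize M x y = q x * M x y / q y.
Proof. by rewrite /symmetrize mul_mx_diag mul_diag_mx !mxE. Qed.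

Lemma symmetrizeB M N : symmetrize (M - N) = symmetrize M - symmetrize N.
Proof. by rewrite /symmetrize mulmxBr mulmxBl. Qed.

Lemma symmetrize_comb a b M N :
  symmetrize (a *: M + b *: N) = a *: symmetrize M + b *: symmetrize N.
Proof. by rewrite /symmetrize mulmxDr mulmxDl -!scalemxAr -!scalemxAl. Qed.

Lemma symmetrizeM M N : symmetrize (M *m N) = symmetrize M *m symmetrize N.
Proof.
rewrite /symmetrize -!mulmxA [diag_mx (map_mx _ _) *m (_ *m _)]mulmxA.
by rewrite (mulmx1C diag_sqrt_piK) mul1mx.
Qed.

Lemma symmetrize_mxpow M l : symmetrize (mxpow M l) = mxpow (symmetrize M) l.
Proof.
elim: l => [|l IHl]; first by rewrite /symmetrize mulmx1 diag_sqrt_piK.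
by rewrite !mxpowS symmetrizeM IHl.
Qed.

Lemma char_poly_symmetrize M : char_poly (symmetrize M) = char_poly M.
Proof. exact/char_poly_similar/(mulmx1C diag_sqrt_piK). Qed.

Lemma mxtrace_symmetrize M : \tr (symmetrize M) = \tr M.
Proof. by rewrite /symmetrize mxtrace_mulC mulmxA (mulmx1C diag_sqrt_piK) mul1mx. Qed.

Lemma symmetrize_adj M : symmetrize (adj_pi pi M) = (symmetrize M)^T.
Proof.
apply/matrixP => x y; rewrite symmetrizeE [RHS]mxE symmetrizeE mxE -!sqr_q.
by field; rewrite !q_neq0.
Qed.

Lemma frob2_symmetrize M : frob2 pi M = frob2mx (symmetrize M).
Proof.
by rewrite /frob2 -mxtrace_symmetrize symmetrizeM symmetrize_adj mxtrace_mulC.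
Qed.

Lemma symmetrize_Pimx : symmetrize (Pimx pi) = sqrt_pi^T *m sqrt_pi.
Proof.
apply/matrixP => x y; rewrite symmetrizeE !mxE big_ord1 !mxE -/(q x) -/(q y) -sqr_q.
by field; rewrite q_neq0.
Qed.

Lemma dot_sqrt_pi : \sum_x pi x = 1 -> dot sqrt_pi sqrt_pi = 1.
Proof. by move=> <-; rewrite dotE; apply: eq_bigr => x _; rewrite mxE -expr2 sqr_q. Qed.

Lemma symmetrize_sym M : reversible pi M -> (symmetrize M)^T = symmetrize M.
Proof.
move=> M_rev; apply/matrixP => x y; rewrite [LHS]mxE !symmetrizeE.
have M_yx : M y x = pi x * M x y / pi y by rewrite M_rev mulrAC mulfV ?mul1r ?gt_eqF.
by rewrite M_yx -!sqr_q; field; rewrite !q_neq0.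
Qed.

Lemma sqrt_pi_symmetrize M : reversible pi M -> (forall x, \sum_y M x y = 1) ->
  sqrt_pi *m symmetrize M = sqrt_pi.
Proof.
move=> M_rev M_sum; apply/rowP => y; rewrite mxE.
transitivity ((\sum_x pi y * M y x) / q y).
  rewrite mulr_suml; apply: eq_bigr => x _.
  by rewrite symmetrizeE -M_rev -sqr_q !mxE !mulrA.
by rewrite -mulr_sumr M_sum mulr1 -sqr_q expr2 mulfK // mxE.
Qed.

End Symmetrize.

Section Gibbs.
Variables (R : rcfType) (n : nat) (pi : 'I_n -> R) (Ps : {set {set 'I_n}}).
Hypotheses (pi_gt0 : forall x, 0 < pi x) (Ps_part : partition Ps [set: 'I_n]).

Local Notation G := (gibbs pi Ps).

Let mem_pblock_self x : x \in pblock Ps x.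
Proof.
by case/and3P: Ps_part => /eqP cover_Ps _ _; rewrite mem_pblock cover_Ps inE.
Qed.

Let pblock_sym x y : (y \in pblock Ps x) = (x \in pblock Ps y).
Proof.
case/and3P: Ps_part => /eqP cover_Ps tI _.
by rewrite -!eq_pblock ?cover_Ps ?inE // eq_sym.
Qed.

Let gibbsE x y : G x y =
  if y \in pblock Ps x then pi y / \sum_(z in pblock Ps x) pi z else 0.
Proof. by rewrite mxE. Qed.

Let pblock_same x y : y \in pblock Ps x -> pblock Ps y = pblock Ps x.
Proof. by case/and3P: Ps_part => _ tI _; apply: same_pblock. Qed.

Lemma gibbs_row_sum x : \sum_y G x y = 1.
Proof.
have mass_gt0 : 0 < \sum_(z in pblock Ps x) pi z.
  by rewrite (bigD1 x) //= ltr_wpDr ?pi_gt0 ?sumr_ge0 // => z _; apply: ltW.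
rewrite (eq_bigr _ (fun y _ => gibbsE x y)) -big_mkcond /= -mulr_suml.
by rewrite divff ?gt_eqF.
Qed.

Lemma gibbs_reversible : reversible pi G.
Proof.
move=> x y; rewrite !gibbsE; have [y_x|y_x] := boolP (y \in pblock Ps x).
  by rewrite (pblock_same y_x) mem_pblock_self !mulrA [pi x * pi y]mulrC.
by rewrite pblock_sym in y_x; rewrite (negbTE y_x) !mulr0.
Qed.

Lemma gibbs_idem : G *m G = G.
Proof.
apply/matrixP => x z; rewrite mxE.
transitivity (\sum_y G x y * G x z); last by rewrite -mulr_suml gibbs_row_sum mul1r.
apply: eq_bigr => y _; rewrite [G x y]gibbsE.
by case: ifP => [/pblock_same y_x|_]; rewrite ?mul0r // !gibbsE y_x.
Qed.

End Gibbs.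

Lemma stochastic_eigenvalue_le1 (R : rcfType) n (P : 'M[R]_n) a :
  stochastic P -> root (char_poly P) a -> `|a| <= 1.
Proof.
move=> [P_ge0 P_sum]; rewrite -eigenvalue_root_char => /eigenvalueP[v vP v_neq0].
pose mass := \sum_y `|v 0 y|.
have mass_gt0 : 0 < mass.
  rewrite lt_def sumr_ge0 // andbT; apply: contra v_neq0 => /eqP/psumr_eq0P v0.
  by apply/eqP/rowP => y; rewrite mxE; apply/normr0_eq0/v0.
rewrite -(ler_pM2r mass_gt0) mul1r {2}/mass mulr_sumr.
apply: (@le_trans _ _ (\sum_y \sum_x `|v 0 x| * P x y)).
  apply: ler_sum => y _; rewrite -normrM.
  have -> : a * v 0 y = (v *m P) 0 y by rewrite vP mxE.
  rewrite mxE (le_trans (ler_norm_sum _ _ _)) // ler_sum // => x _.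
  by rewrite normrM (ger0_norm (P_ge0 x y)).
by rewrite exchange_big ler_sum // => x _; rewrite -mulr_sumr P_sum mulr1.
Qed.

Lemma sorted_count_abs_gt (R : realDomainType) (s : seq R) :
  sorted >=%R s ->
  (count (fun a : R => Num.max `|s`_1| `|s`_(size s).-1| < `|a|)%R s <= 1)%N.
Proof.
move=> s_sorted.
have small i : (0 < i < size s)%N -> `|s`_i| <= Num.max `|s`_1| `|s`_(size s).-1|.
  case/andP=> i_gt0 i_lt; have le_nth := sorted_leq_nth ge_trans ge_refl 0 s_sorted.
  have s1_i : s`_i <= s`_1 by apply: le_nth; rewrite ?inE // (leq_ltn_trans i_gt0).
  have si_last : s`_(size s).-1 <= s`_i.
    apply: le_nth; rewrite ?inE //; first by rewrite ltn_predL (leq_ltn_trans _ i_lt).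
    by rewrite -ltnS (ltn_predK i_lt).
  rewrite le_max; have [si_ge0|si_lt0] := leP 0 s`_i.
    by apply/orP; left; rewrite ger0_norm // (le_trans s1_i (ler_norm _)).
  apply/orP; right; rewrite ltr0_norm // -normrN (le_trans _ (ler_norm _)) //.
  by rewrite lerN2.
case: s s_sorted small => [|a0 t] //= _ small.
rewrite -[X in (_ <= X)%N]addn0 leq_add ?leq_b1 // leqn0 -/(nat_of_bool true).
rewrite eqn0Ngt -has_count; apply/hasPn => a a_t; rewrite -leNgt.
by rewrite -(nth_index 0 a_t) (small (index a t).+1) //= ltnS index_mem.
Qed.

Lemma count_le1_neq (I : finType) (T : Type) (f : I -> T) (p : pred T) i j :
  (count p [seq f k | k <- enum I] <= 1)%N -> i != j -> p (f i) -> ~~ p (f j).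
Proof.
move=> p_count ij pi; apply: contraL p_count => pj; rewrite -ltnNge count_map.
by rewrite -sum1_count enumT (bigD1 i) //= (bigD1 j) 1?eq_sym //= pj.
Qed.

Section ComplexDiagonal.
Variables (C : numClosedFieldType) (n : nat).
Implicit Types (x y : 'rV[C]_n) (U : 'M[C]_n).
Local Open Scope sesquilinear_scope.

Lemma dotmx_unitary x y U : U \is unitarymx -> dotmx (x *m U) (y *m U) = dotmx x y.
Proof.
move=> /unitarymxP U_unit.
by rewrite !dotmxE trmx_mul map_mxM mulmxA -(mulmxA x) U_unit mulmx1.
Qed.

Lemma dotmx_sqr_norm x : dotmx x x = \sum_i `|x 0 i| ^+ 2.
Proof. by rewrite dotmxE mxE; apply: eq_bigr => i _; rewrite !mxE normCK. Qed.

Lemma dotmx_diag_le (d z w : 'rV[C]_n) (rho : C) :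
  0 <= rho -> (forall i, `|d 0 i| <= 1) ->
  (forall i j, i != j -> rho < `|d 0 i| -> `|d 0 j| <= rho) ->
  z *m diag_mx d = z -> z != 0 -> dotmx w z = 0 ->
  dotmx (w *m diag_mx d) (w *m diag_mx d) <= rho ^+ 2 * dotmx w w.
Proof.
move=> rho_ge0 d_le1 one_large z_fixed z_neq0 wz.
(* If |d_i| > rho, then every other d_j is at most rho < 1, so the fixed vector
   z is supported on i, and w orthogonal to z forces w_i = 0. *)
have w_small i : w 0 i = 0 \/ `|d 0 i| <= rho.
  have [|d_large] := real_leP (normr_real (d 0 i)) (ger0_real rho_ge0); first by right.
  left; have z_off j : j != i -> z 0 j = 0.
    move=> ji; have d_neq1 : d 0 j != 1.
      apply/eqP => dj1; have := one_large i j.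
      rewrite eq_sym ji dj1 normr1 => /(_ isT d_large).
      by move/(le_trans (d_le1 i))/(lt_le_trans d_large); rewrite ltxx.
    have : z 0 j * (d 0 j - 1) = 0.
      by rewrite mulrBr mulr1 -[in X in _ - X]z_fixed mul_mx_diag mxE subrr.
    by move/eqP; rewrite mulf_eq0 subr_eq0 (negbTE d_neq1) orbF => /eqP.
  have z_i : z 0 i != 0.
    apply: contra z_neq0 => /eqP z_i0; apply/eqP/rowP => j; rewrite mxE.
    by have [->|] := eqVneq j i; [apply: z_i0 | apply: z_off].
  move: wz; rewrite dotmxE mxE (bigD1 i) //= big1 => [|j ji]; last first.
    by rewrite !mxE z_off // conjC0 mulr0.
  by rewrite addr0 !mxE => /eqP; rewrite mulf_eq0 conjC_eq0 (negbTE z_i) orbF => /eqP.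
rewrite !dotmx_sqr_norm mulr_sumr ler_sum // => i _.
rewrite mul_mx_diag mxE normrM exprMn mulrC.
have [->|d_small] := w_small i; first by rewrite normr0 expr0n /= !mulr0.
by rewrite ler_wpM2r ?exprn_ge0 // lerXn2r ?nnegrE // (le_trans _ d_small).
Qed.

End ComplexDiagonal.

Section RealSymmetric.
Variables (R : rcfType) (n : nat).
Local Notation toC := (real_complex R).
Local Open Scope sesquilinear_scope.

Lemma conj_real_complex (a : R) : (toC a)^* = toC a.
Proof. by apply/conj_Creal; rewrite complex_real. Qed.

Lemma norm_real_complex (a : R) : `|toC a| = toC `|a|.
Proof. by rewrite normc_def /= expr0n /= addr0 sqrtr_sqr. Qed.

Lemma dotmx_real_complex (x y : 'rV[R]_n) :
  dotmx (map_mx toC x) (map_mx toC y) = toC (dot x y).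
Proof.
rewrite dotmxE; have -> : (map_mx toC y)^t* = map_mx toC y^T.
  by apply/matrixP => i j; rewrite !mxE conj_real_complex.
by rewrite -map_mxM mxE.
Qed.

Lemma real_sym_spectral (S : 'M[R]_n) (s : seq R) :
  S^T = S -> char_poly S = \prod_(a <- s) ('X - a%:P) ->
  exists U (d : 'rV[R[i]]_n), [/\ U \is unitarymx,
    map_mx toC S = U^t* *m diag_mx d *m U &
    perm_eq [seq d 0 i | i <- enum 'I_n] (map toC s)].
Proof.
move=> S_sym chS; pose SC := map_mx toC S.
exists (spectralmx SC), (spectral_diag SC).
have U_unitary := spectral_unitarymx SC.
have SCE : SC = (spectralmx SC)^t* *m diag_mx (spectral_diag SC) *m spectralmx SC.
  rewrite -invmx_unitary //; apply/orthomx_spectralP/normalmxP.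
  suff -> : SC^t* = SC by [].
  by apply/matrixP => i j; rewrite !mxE conj_real_complex -[in RHS]S_sym mxE.
split => //; apply: prod_XsubC_eq.
transitivity (char_poly (diag_mx (spectral_diag SC))).
  rewrite char_poly_trig ?diag_mx_is_trig // big_map big_enum /=.
  by apply: eq_bigr => i _; rewrite mxE eqxx mulr1n.
rewrite -(char_poly_similar _ (unitarymxP U_unitary)) -SCE.
rewrite -map_char_poly chS rmorph_prod big_map.
by apply: eq_bigr => a _; rewrite rmorphB /= map_polyX map_polyC.
Qed.

Lemma sym_orth_contract (S : 'M[R]_n) (s : seq R) (u : 'rV[R]_n) (rho : R) :
  S^T = S -> char_poly S = \prod_(a <- s) ('X - a%:P) ->
  {in s, forall a, `|a| <= 1} -> (count (fun a => rho < `|a|)%R s <= 1)%N ->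
  0 <= rho -> u *m S = u -> u != 0 ->
  forall v, dot v u = 0 -> vnorm (v *m S) <= rho * vnorm v.
Proof.
move=> S_sym chS s_le1 s_count rho_ge0 u_fixed u_neq0 v vu.
have [U [d [U_unitary SCE d_perm]]] := real_sym_spectral S_sym chS.
have UU : U *m U^t* = 1%:M by apply/unitarymxP.
have UtU : U^t* *m U = 1%:M := mulmx1C UU.
have d_le1 i : `|d 0 i| <= 1.
  have : d 0 i \in map toC s by rewrite -(perm_mem d_perm) map_f ?mem_enum.
  by case/mapP => a a_s ->; rewrite norm_real_complex -(rmorph1 toC) lecR s_le1.
have rhoC_ge0 : 0 <= toC rho by rewrite ler0c.
have d_count :
    (count (fun x => toC rho < `|x|)%R [seq d 0 k | k <- enum 'I_n]%R <= 1)%N.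
  rewrite (permP d_perm) count_map (eq_count (a2 := fun a => rho < `|a|)) // => a /=.
  by rewrite norm_real_complex ltcR.
have one_large i j : i != j -> toC rho < `|d 0 i| -> `|d 0 j| <= toC rho.
  move=> ij di_large; rewrite real_leNgt ?ger0_real //.
  exact: (count_le1_neq d_count ij di_large).
pose uC := map_mx toC u; pose vC := map_mx toC v.
have z_fixed : uC *m U^t* *m diag_mx d = uC *m U^t*.
  have uC_fixed : uC *m map_mx toC S = uC by rewrite -map_mxM u_fixed.
  by rewrite -{2}uC_fixed SCE !mulmxA -[_ *m U *m U^t*]mulmxA UU mulmx1.
have z_neq0 : uC *m U^t* != 0.
  apply: contra u_neq0 => /eqP z0; have := congr1 (mulmx^~ U) z0.
  by rewrite -mulmxA UtU mulmx1 mul0mx => /eqP; rewrite map_mx_eq0.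
have wz : dotmx (vC *m U^t*) (uC *m U^t*) = 0.
  by rewrite -(dotmx_unitary _ _ U_unitary) -!mulmxA UtU !mulmx1 dotmx_real_complex vu.
have := dotmx_diag_le rhoC_ge0 d_le1 one_large z_fixed z_neq0 wz.
rewrite -[X in X <= _](dotmx_unitary _ _ U_unitary).
rewrite -[X in _ <= _ * X](dotmx_unitary _ _ U_unitary).
rewrite -!mulmxA UtU mulmx1 [U^t* *m _]mulmxA -SCE -map_mxM !dotmx_real_complex.
by rewrite -rmorphXn -rmorphM lecR; apply: vnorm_le_dot.
Qed.

End RealSymmetric.

Lemma reversible_orth_contract (R : rcfType) n (pi : 'I_n -> R) (P : 'M[R]_n) s :
  pos_prob pi -> stochastic P -> reversible pi P -> eig_list P s ->
  forall v, dot v (sqrt_pi pi) = 0 ->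
  vnorm (v *m symmetrize pi P) <= Num.max `|s`_1| `|s`_n.-1| * vnorm v.
Proof.
move=> [pi_gt0 pi_sum] P_stoch P_rev [s_sorted chP].
have s_size : size s = n.
  by have := size_char_poly P; rewrite chP size_prod_XsubC => -[].
apply: (sym_orth_contract (s := s)).
- exact: symmetrize_sym.
- by rewrite char_poly_symmetrize.
- move=> a a_s; apply: stochastic_eigenvalue_le1 P_stoch _.
  by rewrite chP root_prod_XsubC.
- by rewrite -s_size; apply: sorted_count_abs_gt.
- by rewrite le_max normr_ge0.
- by apply: sqrt_pi_symmetrize => //; case: P_stoch.
- apply/eqP => u0; have := dot_sqrt_pi pi_gt0 pi_sum; rewrite u0 dotr0 => /eqP.
  by rewrite eq_sym oner_eq0.
Qed.

Unset Implicit Arguments.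

Theorem corollary4p12 (R : rcfType) (n : nat) (pi : 'I_n -> R)
    (P : 'M[R]_n) (Ps : {set {set 'I_n}}) (s : seq R) :
  pos_prob pi -> stochastic P -> reversible pi P ->
  partition Ps [set: 'I_n] ->
  eig_list P s ->
  forall (l : nat) (alpha : R), (2 <= l)%N -> 0 < alpha < 1 ->
  frob2 pi (mxpow (alpha *: P + (1 - alpha) *: gibbs pi Ps) l - Pimx pi)
    <= (n - 1)%:R * (1 - alpha * gamma_star n s) ^+ (2 * l).
Proof.
move=> pi_prob P_stoch P_rev Ps_part P_eig l alpha l_ge2 /andP[alpha_gt0 alpha_lt1].
have [pi_gt0 pi_sum] := pi_prob.
have n_gt0 : (0 < n)%N.
  rewrite lt0n; apply/eqP => n0; move: pi_sum; rewrite big1 => [/eqP|x _].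
    by rewrite eq_sym oner_eq0.
  by have := ltn_ord x; rewrite {2}n0.
set rho := Num.max `|s`_1| `|s`_n.-1|.
have -> : 1 - alpha * gamma_star n s = alpha * rho + (1 - alpha).
  by rewrite /gamma_star -/rho; ring.
have G_rev := gibbs_reversible pi Ps_part; have G_idem := gibbs_idem pi_gt0 Ps_part.
have G_sum := gibbs_row_sum pi_gt0 Ps_part; have P_sum := P_stoch.2.
rewrite frob2_symmetrize // symmetrizeB symmetrize_mxpow // symmetrize_comb.
rewrite symmetrize_Pimx // natrB //.
apply: frob2mx_mxpow_deflation; last exact: leq_trans l_ge2.
- by rewrite linearD !linearZ /= !symmetrize_sym.
- rewrite mulmxDr -!scalemxAr !sqrt_pi_symmetrize //.
  by rewrite -scalerDl addrC subrK scale1r.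
- exact: dot_sqrt_pi pi_gt0 pi_sum.
- by rewrite addr_ge0 ?mulr_ge0 ?le_max ?normr_ge0 ?subr_ge0 ?ltW.
- apply: vnorm_comb_contract; rewrite ?symmetrize_sym -?symmetrizeM ?G_idem ?ltW //.
  exact: reversible_orth_contract.
Qed.
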